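(* Let $n,m\in\mathbb{N}_0$ with $m\geq n-1$. Then $L_n^{(m)}(x)>0$ for all $x\in[0,1)$. Moreover $L_n^{(m)}(1)>0$ as well, provided $(n,m)\neq(1,0)$.
   Context: Generalized Laguerre polynomials: $L_n^{(\alpha)}(x)=\sum_{j=0}^n(-1)^j\binom{n+\alpha}{n-j}\frac{x^j}{j!}$. *)

From mathcomp Require Import all_boot all_order all_algebra.
Set Implicit Arguments. Unset Strict Implicit. Unset Printing Implicit Defensive.
Import Order.TTheory GRing.Theory Num.Theory.
Local Open Scope ring_scope.

Definition laguerre {R : realFieldType} (n alpha : nat) (x : R) : R :=
  \sum_(j < n.+1) (-1) ^+ j * ('C(n + alpha, n - j))%:R * x ^+ j / (j`!)%:R.

From mathcomp Require Import all_boot all_order all_algebra.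
From mathcomp Require Import ring zify.
Import Order.TTheory GRing.Theory Num.Theory.
Local Open Scope ring_scope.

(* Write L_n^(m)(x) = sum_j (-1)^j a_j with a_j = C(n+m, n-j) x^j / j!.  Since
   a_(j+1) (j+1)(m+j+1) = a_j (n-j) x and n - j <= m + 1 <= (j+1)(m+j+1) when
   m >= n-1, the a_j are nonnegative and nonincreasing for 0 <= x <= 1, so the
   alternating sum is at least a_0 - a_1, which is positive as soon as
   n x < m + 1.  This covers x < 1, and x = 1 when n <= m.  In the remaining
   case m = n - 1 >= 1, x = 1 the first two terms cancel and the same argument
   applies to the alternating sum starting at a_2. *)

Section AlternatingSums.
Context {R : realDomainType}.
Implicit Types (a : nat -> R) (k : nat).

Lemma alternating_sum_split k a :
  \sum_(j < k.+2) (-1) ^+ j * a j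
    = a 0%N - a 1%N + \sum_(j < k) (-1) ^+ j * a j.+2.
Proof.
rewrite !big_ord_recl /= expr0 expr1 mul1r mulN1r addrA.
by congr (_ + _); apply: eq_bigr => j _; rewrite !exprS !mulN1r !mulNr opprK.
Qed.

Lemma alternating_sum_ge0 k a :
  (forall j, (j < k)%N -> 0 <= a j) ->
  (forall j, (j.+1 < k)%N -> a j.+1 <= a j) ->
  0 <= \sum_(j < k) (-1) ^+ j * a j.
Proof.
elim/ltn_ind: k a => -[|[|k]] IH a a_ge0 a_le; first by rewrite big_ord0.
  by rewrite big_ord1 mul1r a_ge0.
rewrite alternating_sum_split addr_ge0 ?subr_ge0 ?a_le //.
apply: (IH k _ (fun j => a j.+2)) => // j lt_jk.
  by apply: a_ge0; lia.
by apply: a_le; lia.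
Qed.

Lemma alternating_sum_gt0 k a : (0 < k)%N -> 0 < a 0%N ->
  ((1 < k)%N -> a 1%N < a 0%N) ->
  (forall j, (j < k)%N -> 0 <= a j) ->
  (forall j, (j.+1 < k)%N -> a j.+1 <= a j) ->
  0 < \sum_(j < k) (-1) ^+ j * a j.
Proof.
case: k => [|[|k]] // _ a0_gt0 a1_lt a_ge0 a_le.
  by rewrite big_ord1 mul1r.
rewrite alternating_sum_split ltr_wpDr ?subr_gt0 ?a1_lt //.
apply: (alternating_sum_ge0 k (fun j => a j.+2)) => j lt_jk.
  by apply: a_ge0; lia.
by apply: a_le; lia.
Qed.

End AlternatingSums.

Section LaguerreTerms.
Context {R : realFieldType}.
Implicit Types (n m j : nat) (x : R).

Definition laguerre_term n m x j : R := 'C(n + m, n - j)%:R * x ^+ j / j`!%:R.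

Lemma laguerreE n m x :
  laguerre n m x = \sum_(j < n.+1) (-1) ^+ j * laguerre_term n m x j.
Proof. by apply: eq_bigr => j _; rewrite /laguerre_term !mulrA. Qed.

Lemma laguerre_term_recurrence n m x j : (j < n)%N ->
  laguerre_term n m x j.+1 * (j.+1 * (m + j.+1))%:R
    = laguerre_term n m x j * ((n - j)%:R * x).
Proof.
move=> lt_jn.
have binE : ((n - j) * 'C(n + m, n - j) = (m + j.+1) * 'C(n + m, n - j.+1))%N.
  have -> : (n - j = (n - j.+1).+1)%N by lia.
  by rewrite mul_bin_left; congr (_ * _)%N; lia.
have fact_neq0 : j`!%:R != 0 :> R by rewrite pnatr_eq0 -lt0n fact_gt0.
rewrite /laguerre_term factS exprS !natrM.
have -> : 'C(n + m, n - j)%:R * x ^+ j / j`!%:R * ((n - j)%:R * x)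
  = ((n - j) * 'C(n + m, n - j))%:R * (x * x ^+ j) / j`!%:R :> R.
  by rewrite natrM; field.
rewrite binE natrM; field.
by rewrite fact_neq0 addrC natr1 pnatr_eq0.
Qed.

Lemma laguerre_term_ge0 n m x j : 0 <= x -> 0 <= laguerre_term n m x j.
Proof. by move=> x_ge0; rewrite divr_ge0 ?mulr_ge0 ?exprn_ge0. Qed.

Lemma laguerre_term_gt0 n m x j : 0 < x -> 0 < laguerre_term n m x j.
Proof.
move=> x_gt0; rewrite divr_gt0 ?mulr_gt0 ?exprn_gt0 ?ltr0n ?fact_gt0 //.
by rewrite bin_gt0; lia.
Qed.

Lemma laguerre_term0_gt0 n m x : 0 < laguerre_term n m x 0.
Proof. by rewrite /laguerre_term expr0 divr1 mulr1 ltr0n bin_gt0; lia. Qed.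

Lemma laguerre_term_le n m x j : (n.-1 <= m)%N -> 0 <= x -> x <= 1 ->
  (j < n)%N -> laguerre_term n m x j.+1 <= laguerre_term n m x j.
Proof.
move=> le_nm x_ge0 x_le1 lt_jn.
have den_gt0 : 0 < (j.+1 * (m + j.+1))%:R :> R by rewrite ltr0n; lia.
rewrite -(ler_pM2r den_gt0) laguerre_term_recurrence // ler_wpM2l //.
  exact: laguerre_term_ge0.
by rewrite (le_trans (ler_piMr _ x_le1)) // ler_nat; nia.
Qed.

Lemma laguerre_term_lt n m x j : (j < n)%N -> 0 < laguerre_term n m x j ->
  (n - j)%:R * x < (j.+1 * (m + j.+1))%:R ->
  laguerre_term n m x j.+1 < laguerre_term n m x j.
Proof.
move=> lt_jn a_gt0 ratio_lt1.
have den_gt0 : 0 < (j.+1 * (m + j.+1))%:R :> R by rewrite ltr0n; lia.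
by rewrite -(ltr_pM2r den_gt0) laguerre_term_recurrence // ltr_pM2l.
Qed.

Lemma laguerre_gt0 n m x : (n.-1 <= m)%N -> 0 <= x -> x <= 1 ->
  ((0 < n)%N -> n%:R * x < m.+1%:R) -> 0 < laguerre n m x.
Proof.
move=> le_nm x_ge0 x_le1 nx_lt; rewrite laguerreE.
apply: alternating_sum_gt0 => // [|n_gt0|j _|j lt_jn].
- exact: laguerre_term0_gt0.
- apply: laguerre_term_lt => //; first exact: laguerre_term0_gt0.
  by rewrite subn0 mul1n (lt_le_trans (nx_lt n_gt0)) // ler_nat; lia.
- exact: laguerre_term_ge0.
- exact: laguerre_term_le.
Qed.

Lemma laguerre_gt0_at1_critical p : 0 < laguerre p.+2 p.+1 (1 : R).
Proof.
rewrite laguerreE alternating_sum_split.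
have -> : laguerre_term p.+2 p.+1 1 1 = laguerre_term p.+2 p.+1 1 0 :> R.
  have := laguerre_term_recurrence p.+2 p.+1 (1 : R) 0 (ltn0Sn p.+1).
  rewrite mul1n subn0 mulr1 addn1.
  by move/(congr1 (fun y => y / p.+2%:R)); rewrite !mulfK ?pnatr_eq0.
rewrite subrr add0r.
apply: (alternating_sum_gt0 p.+1 (fun j => laguerre_term p.+2 p.+1 1 j.+2))
  => // [|lt_1p|j _|j lt_jp].
- exact: laguerre_term_gt0.
- apply: laguerre_term_lt; [lia | exact: laguerre_term_gt0 |].
  by rewrite mulr1 ltr_nat; lia.
- exact: laguerre_term_ge0.
- by apply: laguerre_term_le => //; lia.
Qed.

End LaguerreTerms.

Theorem proposition1 (R : realFieldType) (n m : nat) (hm : (n.-1 <= m)%N) :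
  (forall x : R, 0 <= x -> x < 1 -> 0 < laguerre n m x) /\
  ((n, m) <> (1%N, 0%N) -> 0 < laguerre n m (1 : R)).
Proof.
split=> [x x_ge0 x_lt1 | not_1_0].
  apply: laguerre_gt0 => // [|n_gt0]; first exact: ltW.
  have nx_lt_n : n%:R * x < n%:R by rewrite gtr_pMr // ltr0n.
  by rewrite (lt_le_trans nx_lt_n) // ler_nat; lia.
have [le_nm | lt_mn] := leqP n m.
  by apply: laguerre_gt0 => // _; rewrite mulr1 ltr_nat ltnS.
have {hm} m_eq : m = n.-1 by lia.
subst m; case: n not_1_0 lt_mn => [|[|p]] // _ _.
exact: laguerre_gt0_at1_critical.
Qed.
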